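(* Let $m\in\mathbb{N}$ with $m\ge1$. If $m\not\equiv 6\pmod{12}$, then the friendship graph $F_j$ is $\mathbb{Z}_m$-cordial for all $0\le j\le\lfloor m/3\rfloor$. If $m\equiv 6\pmod{12}$, then $F_j$ is $\mathbb{Z}_m$-cordial for all $0\le j\le\lfloor m/3\rfloor-1$.
   Context: Graphs are finite, simple and undirected. For $n\in\mathbb{N}$, the friendship graph $F_n$ is the union of $n$ copies of the triangle $C_3$ joined at a single common (central) vertex. For an abelian group $A$ and a graph $G=(V,E)$, a vertex labeling $\ell:V\to A$ induces an edge labeling $\ell(\{v_1,v_2\})=\ell(v_1)+\ell(v_2)$. Let $f_V(a)=|\{v\in V:\ell(v)=a\}|$ and $f_E(a)=|\{e\in E:\ell(e)=a\}|$. The labeling is $A$-cordial if $|f_V(a_1)-f_V(a_2)|\le 1$ and $|f_E(a_1)-f_E(a_2)|\le 1$ for all $a_1,a_2\in A$; $G$ is $A$-cordial if it admits an $A$-cordial labeling. *)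

From mathcomp Require Import all_boot all_order all_algebra.
Set Implicit Arguments. Unset Strict Implicit. Unset Printing Implicit Defensive.
Import GRing.Theory.
Local Open Scope ring_scope.

Definition edges (T : finType) (adj : rel T) : {set {set T}} :=
  [set [set p.1; p.2] | p in [set p : T * T | adj p.1 p.2]].

Definition fV (A : finZmodType) (T : finType) (l : T -> A) (a : A) : nat :=
  #|[set v : T | l v == a]|.

Definition fE (A : finZmodType) (T : finType) (adj : rel T) (l : T -> A) (a : A) : nat :=
  #|[set e in edges adj |
     [exists x : T, exists y : T,
        [&& e == [set x; y], x != y & l x + l y == a]]]|.

Definition cordial_labeling (A : finZmodType) (T : finType) (adj : rel T) (l : T -> A) :=
  forall a1 a2 : A,
    [/\ (fV l a1 <= fV l a2 + 1)%N, (fV l a2 <= fV l a1 + 1)%N,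
        (fE adj l a1 <= fE adj l a2 + 1)%N & (fE adj l a2 <= fE adj l a1 + 1)%N].

Definition cordial (A : finZmodType) (T : finType) (adj : rel T) : Prop :=
  exists l : T -> A, cordial_labeling adj l.

(* Friendship graph F_n: center None, triangle i has outer vertices Some (i,false), Some (i,true). *)
Definition fr_vert (n : nat) : finType := option ('I_n * bool)%type.

Definition fr_adj (n : nat) : rel (fr_vert n) := fun x y =>
  match x, y with
  | None, None => false
  | None, Some _ => true
  | Some _, None => true
  | Some (i, b), Some (j, c) => (i == j) && (b != c)
  end.

(* Z_m for m >= 1: 'I_(m.-1).+1 = 'I_m with its canonical additive group structure *)
Definition Zm (m : nat) : finZmodType := 'I_(m.-1).+1.

(* Label the centre of F_j by 0 and the two outer vertices of the i-th
   triangle by x_i and y_i, so that its three edges get x_i, y_i and x_i + y_i.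
   If these 3j values are pairwise distinct and no x_i, y_i is 0, every label
   is carried by at most one vertex and at most one edge, which is cordial.
   Such families in Z_m come from integer triples (d, K + a_d, K + a_d + d),
   0 < d <= K, where the pairs {a_d, a_d + d} are disjoint in [1, N] and
   K + N <= m: a Skolem sequence (N = 2K) when 12 | m and K = m/3, and an
   explicit pairing with N = 2K + 1, hence 3K + 1 <= m, when 3 does not
   divide m (K = m/3 rounded down) or m = 6 mod 12 (K = m/3 - 1).  When
   m = 3k with k odd, x_i = 3i + 1 and y_i = 3i + 2 work directly in Z_m. *)

From mathcomp Require Import all_boot all_order all_algebra.
From mathcomp Require Import zify.
Set Implicit Arguments. Unset Strict Implicit. Unset Printing Implicit Defensive.
Import GRing.Theory.

Lemma set2_addr (T : finType) (V : nmodType) (f : T -> V) (u v x y : T) :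
  x != y -> [set u; v] = [set x; y] -> (f u + f v = f x + f y)%R.
Proof.
move=> x_neq_y uv_xy.
have /set2P x_uv : x \in [set u; v] by rewrite uv_xy set21.
have /set2P y_uv : y \in [set u; v] by rewrite uv_xy set22.
by case: x_uv y_uv x_neq_y => -> [] ->; rewrite ?eqxx // addrC.
Qed.

Section InjectiveLabeling.
Variables (A : finZmodType) (T : finType) (adj : rel T) (l : T -> A).

Definition edge_label_injective : Prop :=
  forall u v u' v', adj u v -> adj u' v' ->
    (l u + l v = l u' + l v')%R -> [set u; v] = [set u'; v'].

Lemma fV_le1 a : injective l -> fV l a <= 1.
Proof.
move=> inj_l; apply/card_le1_eqP => u v; rewrite !inE => /eqP lu /eqP lv.
by apply: inj_l; rewrite lu lv.
Qed.

Lemma fE_le1 a : edge_label_injective -> fE adj l a <= 1.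
Proof.
move=> inj_sum; apply/card_le1_eqP => e e'; rewrite !inE.
have edgeP f : f \in edges adj ->
    [exists x, exists y, [&& f == [set x; y], x != y & (l x + l y)%R == a]] ->
    exists u v, [/\ f = [set u; v], adj u v & (l u + l v)%R = a].
  move=> /imsetP[[u v]]; rewrite inE /= => adj_uv ->.
  move=> /existsP[x /existsP[y /and3P[/eqP uv_xy x_neq_y /eqP lxy]]].
  by exists u, v; rewrite -lxy (set2_addr l x_neq_y uv_xy).
move=> /andP[e_edge e_lab] /andP[e'_edge e'_lab].
have [u [v [-> adj_uv luv]]] := edgeP e e_edge e_lab.
have [u' [v' [-> adj_uv' luv']]] := edgeP e' e'_edge e'_lab.
by apply: inj_sum; rewrite ?luv ?luv'.
Qed.

Lemma cordial_labeling_inj :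
  injective l -> edge_label_injective -> cordial_labeling adj l.
Proof.
move=> inj_l inj_sum a1 a2.
have := fV_le1 a1 inj_l; have := fV_le1 a2 inj_l.
have := fE_le1 a1 inj_sum; have := fE_le1 a2 inj_sum.
by split; lia.
Qed.

End InjectiveLabeling.

(* Edge r of the i-th triangle: r = 0, 1 join the centre (label 0) to the
   vertices labelled x i, y i, and r = 2 joins these two. *)
Definition tri_edge (V : nmodType) (x y : nat -> V) (i r : nat) : V :=
  if r == 0 then x i else if r == 1 then y i else (x i + y i)%R.

Definition distinct_triples (V : nmodType) (K : nat) (x y : nat -> V) : Prop :=
  (forall i, i < K -> x i != 0%R /\ y i != 0%R) /\
  (forall i k r s, i < K -> k < K -> r < 3 -> s < 3 ->
     tri_edge x y i r = tri_edge x y k s -> i = k /\ r = s).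

Section FriendshipLabeling.
Variables (A : finZmodType) (j : nat) (x y : nat -> A).

Definition fr_label (v : fr_vert j) : A :=
  if v is Some (i, b) then tri_edge x y i b else 0%R.

Definition fr_edge (i : 'I_j) (r : nat) : {set fr_vert j} :=
  if r == 2 then [set Some (i, false); Some (i, true)]
  else [set None; Some (i, r == 1)].

Lemma fr_adj_edge u v : fr_adj u v ->
  exists i r, [/\ r < 3, [set u; v] = fr_edge i r &
                  (fr_label u + fr_label v)%R = tri_edge x y i r].
Proof.
case: u v => [[i b]|] [[i' b']|] //= => [/andP[/eqP <-] | _ | _].
- case: b b' => [] [] // _; exists i, 2; rewrite /fr_edge /tri_edge //=.
  by rewrite setUC addrC.
- by exists i, b; case: b; rewrite /fr_edge /tri_edge /= addr0 setUC.
- by exists i', b'; case: b'; rewrite /fr_edge /tri_edge /= add0r.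
Qed.

Lemma fr_cordial K : distinct_triples K x y -> j <= K -> cordial A (@fr_adj j).
Proof.
move=> [nz inj_tri] le_jK.
have lt_K (i : 'I_j) : i < K := leq_trans (ltn_ord i) le_jK.
have lt_3 (b : bool) : b < 3 by case: b.
exists fr_label; apply: cordial_labeling_inj.
- case=> [[i b]|] [[i' b']|] //= => eq_lab.
  + have [/val_inj -> ] := inj_tri _ _ _ _ (lt_K i) (lt_K i') (lt_3 b) (lt_3 b') eq_lab.
    by case: b b' {eq_lab} => [] [].
  + by have [] := nz i (lt_K i); case: b eq_lab => /= <-; rewrite eqxx.
  + by have [] := nz i' (lt_K i'); case: b' eq_lab => /= ->; rewrite eqxx.
- move=> u v u' v' /fr_adj_edge[i [r [lt_r3 -> ->]]] /fr_adj_edge[i' [r' [lt_r'3 -> ->]]].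
  by case/inj_tri; rewrite ?lt_K // => /val_inj -> ->.
Qed.

End FriendshipLabeling.

Lemma inZpD n a b : inZp (a + b) = (inZp a + inZp b)%R :> 'I_n.+1.
Proof. by apply: val_inj; rewrite /= modnDm. Qed.

Lemma inZp_tri_edge n (X Y : nat -> nat) i r :
  inZp (tri_edge X Y i r) = tri_edge (fun i => inZp (X i)) (fun i => inZp (Y i)) i r
    :> 'I_n.+1.
Proof. by rewrite /tri_edge; case: ifP => _ //; case: ifP => _ //; rewrite inZpD. Qed.

Lemma inZp_neq0 n a : 0 < a < n.+1 -> inZp a != 0%R :> 'I_n.+1.
Proof. by move=> a_bnd; apply/eqP => /(congr1 val) /=; rewrite modn_small; lia. Qed.

Lemma inZp_inj_pos n a b : 0 < a <= n.+1 -> 0 < b <= n.+1 ->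
  inZp a = inZp b :> 'I_n.+1 -> a = b.
Proof.
have mod_pos c : 0 < c <= n.+1 -> c %% n.+1 = if c == n.+1 then 0 else c.
  by case: eqP => [-> | ne_c] c_bnd; rewrite ?modnn // modn_small; lia.
move=> a_bnd b_bnd /(congr1 val) /=; rewrite (mod_pos a a_bnd) (mod_pos b b_bnd).
by case: (a =P n.+1); case: (b =P n.+1); lia.
Qed.

Lemma distinct_triples_inZp n K (X Y : nat -> nat) :
  distinct_triples K X Y -> (forall i, i < K -> X i + Y i <= n.+1) ->
  @distinct_triples (Zm n.+1) K (fun i => inZp (X i)) (fun i => inZp (Y i)).
Proof.
move=> [nz inj_tri] le_m.
have tri_bnd i r : i < K -> 0 < tri_edge X Y i r <= n.+1.
  move=> lt_iK; have := nz i lt_iK; have := le_m i lt_iK.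
  by case: r => [|[|r]]; rewrite /tri_edge /=; lia.
split=> [i lt_iK | i k r s lt_iK lt_kK lt_r lt_s].
  by have := nz i lt_iK; have := le_m i lt_iK; split; apply: inZp_neq0; lia.
rewrite -!inZp_tri_edge => /inZp_inj_pos eq_tri.
by apply: inj_tri => //; apply: eq_tri; exact: tri_bnd.
Qed.

(* The pairs {a d, a d + d}, 0 < d <= K, are disjoint subsets of [1, N]; for
   N = 2K this is a Skolem sequence of order K. *)
Definition difference_pairing (N K : nat) (a : nat -> nat) : Prop :=
  [/\ forall d, 0 < d <= K -> 0 < a d /\ a d + d <= N,
      forall d e, 0 < d <= K -> 0 < e <= K -> a d = a e -> d = e,
      forall d e, 0 < d <= K -> 0 < e <= K -> a d + d = a e + e -> d = e &
      forall d e, 0 < d <= K -> 0 < e <= K -> a d <> a e + e].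

Lemma pairing_triples N K a : difference_pairing N K a ->
  distinct_triples K succn (fun i => K + a i.+1) /\
  forall i, i < K -> i.+1 + (K + a i.+1) <= K + N.
Proof.
case=> bnd inj_a inj_ad disj; split=> [|i lt_iK]; last by have := bnd i.+1 lt_iK; lia.
split=> [i lt_iK | i k r s lt_iK lt_kK lt_r lt_s]; first by have := bnd i.+1 lt_iK; lia.
have := bnd i.+1 lt_iK; have := bnd k.+1 lt_kK.
have := inj_a i.+1 k.+1 lt_iK lt_kK; have := inj_ad i.+1 k.+1 lt_iK lt_kK.
have := disj i.+1 k.+1 lt_iK lt_kK; have := disj k.+1 i.+1 lt_kK lt_iK.
by case: r s lt_r lt_s => [|[|[|r]]] [|[|[|s]]] //; rewrite /tri_edge /=; lia.
Qed.

(* The pairs with odd d are nested intervals around one centre, those with even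
   d around another; together they cover [1, 2K + 1] but one point. *)
Definition nested_pairing K d :=
  if odd d then K.+1./2 - d./2 else K.+1./2.*2 + K./2 + 1 - d./2.

Lemma nested_difference_pairing K : difference_pairing (2 * K + 1) K (nested_pairing K).
Proof.
rewrite /nested_pairing; split=> [d ? | d e ? ? | d e ? ? | d e ? ?];
by repeat case: ifP => ?; lia.
Qed.

(* Skolem's construction for order 4s: the pairs with even d are nested around
   6s, those with odd d around 2s +- 1/2, except for three exceptional pairs. *)
Definition skolem_pairing s d :=
  if ~~ odd d then 6 * s - d./2
  else if d == 1 then s
  else if d == 2 * s - 1 then 2 * s
  else if d == 4 * s - 1 then 2 * s + 1
  else if d <= 2 * s - 3 then s + 1 + (2 * s - 1 - d)./2
  else (4 * s - 1 - d)./2.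

Lemma skolem_difference_pairing s : difference_pairing (8 * s) (4 * s) (skolem_pairing s).
Proof.
rewrite /skolem_pairing; split=> [d ? | d e ? ? | d e ? ? | d e ? ?];
by repeat case: ifP => ?; lia.
Qed.

Lemma modn_lt_double a k : a < 2 * k -> a %% k = if a < k then a else a - k.
Proof.
case: ifP => [lt_ak _ | ge_ak lt_a2k]; first exact: modn_small.
have le_ka : k <= a by rewrite leqNgt ge_ak.
by rewrite -{1}(subnK le_ka) modnDr modn_small; lia.
Qed.

(* x i and y i exhaust the residues 1 and 2 mod 3, and since k is odd the sums
   3 (2i + 1) run through all multiples of 3 in Z_(3k). *)
Lemma mod3_triples n k : n.+1 = 3 * k -> odd k ->
  @distinct_triples (Zm n.+1) k (fun i => inZp (3 * i + 1)) (fun i => inZp (3 * i + 2)).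
Proof.
move=> m_3k odd_k.
have val_tri i r : i < k -> r < 3 ->
    val (tri_edge (fun i => inZp (3 * i + 1)) (fun i => inZp (3 * i + 2)) i r : 'I_n.+1)
    = if r == 0 then 3 * i + 1 else if r == 1 then 3 * i + 2
      else 3 * (if 2 * i + 1 < k then 2 * i + 1 else 2 * i + 1 - k).
  move=> lt_ik; rewrite -inZp_tri_edge /= m_3k /tri_edge.
  case: r => [|[|[|r]]] //= _; [by rewrite modn_small; lia | by rewrite modn_small; lia |].
  by rewrite (_ : (_ + _)%R = 3 * (2 * i + 1)) -?muln_modr ?modn_lt_double //; lia.
split=> [i lt_ik | i i' r r' lt_ik lt_i'k lt_r lt_r'].
  by split; apply: inZp_neq0; lia.
move=> /(congr1 val); rewrite !val_tri //.
by case: r r' lt_r lt_r' => [|[|[|r]]] [|[|[|r']]] //= _ _; do 2?case: ifP; lia.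
Qed.

Lemma cordial_of_pairing n N K a j : difference_pairing N K a -> K + N <= n.+1 ->
  j <= K -> cordial (Zm n.+1) (@fr_adj j).
Proof.
move=> /pairing_triples[triples bnd] le_m; apply: fr_cordial.
by apply: distinct_triples_inZp triples _ => i /bnd /leq_trans; apply.
Qed.

Theorem corollary9p5 (m : nat) (hm : (1 <= m)%N) :
  (m %% 12 <> 6 -> forall j : nat, (j <= m %/ 3)%N -> cordial (Zm m) (@fr_adj j)) /\
  (m %% 12 = 6 -> forall j : nat, (j <= m %/ 3 - 1)%N -> cordial (Zm m) (@fr_adj j)).
Proof.
case: m hm => [//|n] _; split=> [m_n6 | m_6] j le_j; last first.
  by apply: (cordial_of_pairing (nested_difference_pairing (n.+1 %/ 3 - 1))) le_j; lia.
have [m_3 | m_n3] := eqVneq (n.+1 %% 3) 0; last first.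
  by apply: (cordial_of_pairing (nested_difference_pairing (n.+1 %/ 3))) le_j; lia.
have [odd_k | even_k] := boolP (odd (n.+1 %/ 3)).
  by apply: fr_cordial (mod3_triples _ odd_k) le_j; lia.
by apply: (cordial_of_pairing (skolem_difference_pairing (n.+1 %/ 12))); lia.
Qed.
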